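(* Let $(\phi,y)$ be feasible and satisfy the modified condition (MC). Let $(\phi^\dagger,y^\dagger)$ be feasible such that either $\phi^\dagger\ge\phi$ coordinatewise or $\phi^\dagger\le\phi$ coordinatewise. Then $T(\phi,y)\le T(\phi^\dagger,y^\dagger)$, where $T(\phi,y)=\sum_{(i,j)\in\mathcal E}D_{ij}(F_{ij})+\sum_{i}B_i(Y_i)$.
   Context: Network model. $\mathcal G=(\mathcal V,\mathcal E)$ is a finite directed graph with $(j,i)\in\mathcal E$ whenever $(i,j)\in\mathcal E$; $\mathcal N(i)=\{j:(i,j)\in\mathcal E\}$. $\mathcal C$ is a finite catalog; item $k$ has nonempty designated server set $\mathcal S_k\subseteq\mathcal V$. Exogenous request rates $r_i(k)\ge0$. Variables: $\phi_{ij}(k)\in[0,1]$ with $\phi_{ij}(k)=0$ if $(i,j)\notin\mathcal E$, and $y_i(k)\in[0,1]$. Flow conservation: $y_i(k)+\sum_{j}\phi_{ij}(k)=1$ if $i\notin\mathcal S_k$ and $=0$ if $i\in\mathcal S_k$. A pair $(\phi,y)$ is feasible if it satisfies these constraints and the arrival rates $t_i(k)$, solving $t_i(k)=r_i(k)+\sum_j t_j(k)\phi_{ji}(k)$, are uniquely determined and nonnegative (e.g. when for each $k$ the graph with edges $\{(i,j):\phi_{ij}(k)>0\}$ is acyclic). $f_{ji}(k)=t_i(k)\phi_{ij}(k)$, $F_{ij}=\sum_k f_{ij}(k)$, $Y_i=\sum_k y_i(k)$. $D_{ij},B_i$ are continuously differentiable, increasing, convex, zero at $0$. Marginal cost: $\frac{\partial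 T}{\partial r_i(k)}=\sum_{j\in\mathcal N(i)}\phi_{ij}(k)\big(D'_{ji}(F_{ji})+\frac{\partial T}{\partial r_j(k)}\big)$, zero if $i\in\mathcal S_k$ or $y_i(k)=1$. Modified condition (MC): with $\delta_i(k)=\min\{B_i'(Y_i)/t_i(k),\ \min_{j\in\mathcal N(i)}(D'_{ji}(F_{ji})+\frac{\partial T}{\partial r_j(k)})\}$ (where $B_i'(Y_i)/t_i(k):=\infty$ if $t_i(k)=0$), for all $i,k$: $B_i'(Y_i)=t_i(k)\delta_i(k)$ if $y_i(k)>0$, $B_i'(Y_i)\ge t_i(k)\delta_i(k)$ if $y_i(k)=0$; and for all $j\in\mathcal N(i)$, $D'_{ji}(F_{ji})+\frac{\partial T}{\partial r_j(k)}=\delta_i(k)$ if $\phi_{ij}(k)>0$, $\ge\delta_i(k)$ if $\phi_{ij}(k)=0$. *)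

From HB Require Import structures.
From mathcomp Require Import all_boot all_order all_algebra.
From mathcomp Require Import all_classical all_reals all_analysis.
Set Implicit Arguments. Unset Strict Implicit. Unset Printing Implicit Defensive.
Import Order.TTheory GRing.Theory Num.Theory.
Import numFieldNormedType.Exports.
Local Open Scope classical_set_scope.
Local Open Scope ring_scope.

Section CacheNetwork.
Variables (R : realType) (V C : finType).

Definition cost_fun (f : R -> R) : Prop :=
  [/\ (forall x, 0 <= x -> derivable f x 1),
      {within [set x : R | 0 <= x], continuous (derive1 f)},
      (forall a b, 0 <= a -> a <= b -> f a <= f b),
      (forall a b s, 0 <= a -> 0 <= b -> 0 <= s <= 1 ->
         f (s * a + (1 - s) * b) <= s * f a + (1 - s) * f b)
    & f 0 = 0].

Definition arrival_eq (r : V -> C -> R) (phi : V -> V -> C -> R) (k : C)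
    (t : V -> R) : Prop :=
  forall i, t i = r i k + \sum_(j : V) t j * phi j i k.

Definition feasible (E : rel V) (S : C -> {set V}) (r : V -> C -> R)
    (phi : V -> V -> C -> R) (y : V -> C -> R) : Prop :=
  [/\ (forall i j k, 0 <= phi i j k <= 1),
      (forall i j k, ~~ E i j -> phi i j k = 0),
      (forall i k, 0 <= y i k <= 1),
      (forall i k, y i k + \sum_(j : V) phi i j k = if i \in S k then 0 else 1)
    & (forall k,
        [/\ exists t, arrival_eq r phi k t,
            (forall t t', arrival_eq r phi k t -> arrival_eq r phi k t' -> t = t')
          & (forall t, arrival_eq r phi k t -> forall i, 0 <= t i)])].

(* F_ab = sum_k f_ab(k), where f_ji(k) = t_i(k) phi_ij(k). *)
Definition Flow (phi : V -> V -> C -> R) (t : V -> C -> R) (a b : V) : R :=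
  \sum_(k : C) t b k * phi b a k.

Definition Ycache (y : V -> C -> R) (i : V) : R := \sum_(k : C) y i k.

Definition Tcost (E : rel V) (D : V -> V -> R -> R) (B : V -> R -> R)
    (phi : V -> V -> C -> R) (y : V -> C -> R) (t : V -> C -> R) : R :=
  \sum_(i : V) \sum_(j : V | E i j) D i j (Flow phi t i j)
  + \sum_(i : V) B i (Ycache y i).

(* m i k plays the role of dT/dr_i(k). *)
Definition marginal_eq (E : rel V) (S : C -> {set V}) (D : V -> V -> R -> R)
    (phi : V -> V -> C -> R) (y : V -> C -> R) (t : V -> C -> R)
    (m : V -> C -> R) : Prop :=
  forall i k, m i k =
    if (i \in S k) || (y i k == 1) then 0
    else \sum_(j : V | E i j) phi i j k * (derive1 (D j i) (Flow phi t j i) + m j k).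

(* delta_i(k), valued in the extended reals (min over an empty set is +oo,
   and B_i'(Y_i)/t_i(k) := +oo when t_i(k) = 0). *)
Definition delta (E : rel V) (D : V -> V -> R -> R) (B : V -> R -> R)
    (phi : V -> V -> C -> R) (y : V -> C -> R) (t : V -> C -> R)
    (m : V -> C -> R) (i : V) (k : C) : \bar R :=
  Order.min
    (if t i k == 0 then +oo%E else (derive1 (B i) (Ycache y i) / t i k)%:E)
    (\big[Order.min/+oo%E]_(j : V | E i j)
        (derive1 (D j i) (Flow phi t j i) + m j k)%:E).

Definition MC (E : rel V) (D : V -> V -> R -> R) (B : V -> R -> R)
    (phi : V -> V -> C -> R) (y : V -> C -> R) (t : V -> C -> R)
    (m : V -> C -> R) : Prop :=
  forall i k,
    let d := delta E D B phi y t m i k in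
    (if 0 < y i k then (derive1 (B i) (Ycache y i))%:E = ((t i k)%:E * d)%E
     else ((t i k)%:E * d <= (derive1 (B i) (Ycache y i))%:E)%E)
    /\ (forall j, E i j ->
          if 0 < phi i j k then (derive1 (D j i) (Flow phi t j i) + m j k)%:E = d
          else (d <= (derive1 (D j i) (Flow phi t j i) + m j k)%:E)%E).

End CacheNetwork.

From HB Require Import structures.
From mathcomp Require Import all_boot all_order all_algebra.
From mathcomp Require Import all_classical all_reals all_analysis.
From mathcomp Require Import ring lra.
Import Order.TTheory GRing.Theory Num.Theory.
Import numFieldNormedType.Exports.
Set Implicit Arguments. Unset Strict Implicit.
Local Open Scope ring_scope.

(* We show T(phi, y) <= T(phid, yd)
   by linearising the convex total cost at (phi, y):
   1. [Tcost_tangent]: T(phid) >= T(phi) + L, where L is the first-order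
      variation sum_links D'(F) (Fd - F) + sum_i B'(Y) (Yd - Y); it rests on the
      tangent inequality for convex differentiable costs [cost_tangent].
   2. [linear_gain]: L = sum_k sum_i gain i k with the local gains
        gain i k = td_i (sum_j phid_ij (c_ij + m_j) - m_i) + b_i (yd_i - y_i),
      by the marginal-cost recursion m = phi (c + m) and the duality identity
      [arrival_duality] applied to both arrival vectors t and td.
   3. [gain_ge0]: every local gain is nonnegative.  MC yields a shadow price x
      at (i, k) with m_i = x (1 - y_i), x <= c_ij + m_j on every link and
      t_i x <= b_i (equality if y_i > 0); comparability orders (y, t) against
      (yd, td) [states_comparable]; the inequality is then [local_gain_ge0].
   The positivity facts used along the way (m >= 0, t <= td when phi <= phid)
   hold because a routing matrix with unique arrival rates is transient: no set
   of nodes can keep all of its traffic forever [no_stochastic_class]. *)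

Section CostFunctions.
Local Open Scope classical_set_scope.
Variables (R : realType) (f : R -> R).
Hypothesis cost_f : cost_fun f.

Lemma derive1_cvg a : derivable f a 1 ->
  (fun h => h^-1 * (f (h + a) - f a)) @ 0^' --> derive1 f a.
Proof.
move=> df; rewrite derive1E.
suff -> : (fun h => h^-1 * (f (h + a) - f a)) =
          (fun h : R => h^-1 *: ((f \o shift a) (h *: 1) - f a)) by exact: df.
by apply/funext => h; rewrite /= scaler1.
Qed.

Lemma cost_chord a b s : 0 <= a -> 0 <= b -> 0 <= s <= 1 ->
  f (s * (b - a) + a) - f a <= s * (f b - f a).
Proof.
case: cost_f => _ _ _ convex _ a0 b0 s01.
have -> : s * (b - a) + a = s * b + (1 - s) * a by ring.
by rewrite lerBlDr; apply: le_trans (convex _ _ _ b0 a0 s01) _; lra.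
Qed.

(* Monotonicity makes every right difference quotient nonnegative. *)
Lemma cost_derive_ge0 a : 0 <= a -> 0 <= derive1 f a.
Proof.
case: cost_f => df _ mono _ _ a0.
have := cvg_dnbhs_at_right (derive1_cvg (df a a0)).
move=> /cvgr_to_ge; apply.
near=> h; have h0 : 0 < h by near: h; exact: nbhs_right_gt.
apply: mulr_ge0; first by rewrite invr_ge0 ltW.
by rewrite subr_ge0; apply: mono; rewrite // lerDr ltW.
Unshelve. all: by end_near. Qed.

(* The tangent at a lies below the graph: the difference quotients are
   bounded by the chord slope on the side of b. *)
Lemma cost_tangent a b : 0 <= a -> 0 <= b -> f a + derive1 f a * (b - a) <= f b.
Proof.
case: (cost_f) => df _ _ _ _ a0 b0; rewrite -lerBrDl.
have [->|nba] := eqVneq b a; first by rewrite !subrr mulr0.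
set slope := (f b - f a) / (b - a).
have chord h : 0 <= h / (b - a) <= 1 -> f (h + a) - f a <= h * slope.
  move=> s01; have := cost_chord a0 b0 s01.
  by rewrite divfK ?subr_eq0 // mulrAC -mulrA.
move: nba; rewrite neq_lt => /orP[ba|ab].
- rewrite -ler_ndivrMr ?subr_lt0 // -/slope.
  have := cvg_dnbhs_at_left (derive1_cvg (df a a0)); move=> /cvgr_to_ge; apply.
  near=> h; have h0 : h < 0 by near: h; exact: nbhs_left_lt.
  have hba : b - a < h by near: h; apply: nbhs_left_gt; rewrite subr_lt0.
  rewrite ler_ndivlMl //.
  apply: chord; rewrite ler_ndivlMr ?ler_ndivrMr ?subr_lt0 // mul0r mul1r.
  by rewrite !ltW.
- rewrite -ler_pdivlMr ?subr_gt0 // -/slope.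
  have := cvg_dnbhs_at_right (derive1_cvg (df a a0)); move=> /cvgr_to_le; apply.
  near=> h; have h0 : 0 < h by near: h; exact: nbhs_right_gt.
  have hba : h < b - a by near: h; apply: nbhs_right_lt; rewrite subr_gt0.
  rewrite ler_pdivrMl //; apply: chord.
  rewrite ler_pdivlMr ?ler_pdivrMr ?subr_gt0 // mul0r mul1r.
  by rewrite !ltW.
Unshelve. all: by end_near. Qed.
End CostFunctions.

Lemma left_null_vector (R : fieldType) (V : finType) (A : V -> V -> R)
    (w : V -> R) (j0 : V) :
  w j0 != 0 -> (forall j, \sum_i A j i * w i = 0) ->
  exists2 x : V -> R, exists i, x i != 0 & forall i, \sum_j x j * A j i = 0.
Proof.
move=> wj0 Aw.
pose Am : 'M[R]_#|V| := \matrix_(a, b) A (enum_val a) (enum_val b).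
pose wm : 'cV[R]_#|V| := \col_a w (enum_val a).
have sumE (F : V -> R) : \sum_i F i = \sum_(a < #|V|) F (enum_val a).
  exact: (big_enum_val F).
have : \det Am == 0.
  rewrite -det_tr; apply/det0P; exists wm^T.
    apply: contra wj0 => /eqP/matrixP/(_ 0 (enum_rank j0)).
    by rewrite !mxE enum_rankK => ->.
  rewrite -trmx_mul; apply/eqP; rewrite trmx_eq0; apply/eqP/matrixP => a z.
  rewrite !mxE -[RHS](Aw (enum_val a)) sumE.
  by apply: eq_bigr => b _; rewrite !mxE.
case/det0P => u u0 uA; exists (fun j => u 0 (enum_rank j)).
  apply: contrapT => u_eq0; apply/negP: u0; rewrite negbK.
  apply/eqP/matrixP => z a; rewrite (ord1 z) !mxE.
  have [//|ua] := eqVneq (u 0 a) 0.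
  by case: u_eq0; exists (enum_val a); rewrite enum_valK.
move=> i; move/matrixP: uA => /(_ 0 (enum_rank i)); rewrite !mxE => uAi.
rewrite -[RHS]uAi (sumE (fun j => u 0 (enum_rank j) * A j i)).
by apply: eq_bigr => a _; rewrite !mxE enum_rankK enum_valK.
Qed.

Section TransientKernel.
Variables (R : realType) (V : finType) (P : V -> V -> R).
Hypothesis P_ge0 : forall i j, 0 <= P i j.
Hypothesis P_row_le1 : forall i, \sum_j P i j <= 1.
Hypothesis P_transient :
  forall x : V -> R, (forall i, x i = \sum_j x j * P j i) -> forall i, x i = 0.

(* No nonempty set M keeps all the mass of its rows: otherwise the indicator
   of M is a right null vector of I - P restricted to the rows of M, and the
   corresponding left null vector is a nonzero solution of x = x P. *)
Lemma no_stochastic_class (M : {set V}) (j0 : V) : j0 \in M ->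
  ~ (forall j, j \in M -> \sum_(i in M) P j i = 1).
Proof.
move=> j0M stoch.
have leak j i : j \in M -> i \notin M -> P j i = 0.
  move=> jM iM; apply: (psumr_eq0P (P := [pred l | l \notin M])) => //.
  apply/le_anti; rewrite sumr_ge0 // andbT.
  by have := P_row_le1 j; rewrite (bigID [pred l | l \in M]) /= stoch // gerDl.
pose Q j i := if j \in M then P j i else 0.
have [x [i0 xi0] xQ] : exists2 x : V -> R, exists i, x i != 0 &
    forall i, \sum_j x j * ((j == i)%:R - Q j i) = 0.
  apply: (@left_null_vector _ _ (fun j i => (j == i)%:R - Q j i)
            (fun i => (i \in M)%:R) j0); first by rewrite j0M oner_eq0.
  move=> j; rewrite /Q; case jM: (j \in M).
  - under eq_bigr do rewrite mulrBl.
    rewrite sumrB (bigD1 j) //= eqxx mul1r big1 ?addr0 => [|i /negbTE ij];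
      last by rewrite eq_sym ij mul0r.
    rewrite jM mulr1n -[X in X - _](stoch j) // big_mkcond /=.
    apply/eqP; rewrite subr_eq0; apply/eqP.
    by apply: eq_bigr => i _; case: (i \in M); rewrite ?mulr1 ?mulr0.
  - rewrite (bigD1 j) //= big1 => [|i /negbTE ij]; last by rewrite eq_sym ij !subr0 mul0r.
    by rewrite jM !mulr0 add0r.
have xQE i : x i = \sum_(j in M) x j * P j i.
  have := xQ i; under eq_bigr do rewrite mulrBr.
  rewrite sumrB (bigD1 i) //= eqxx mulr1 big1 => [|j /negbTE ji]; last by rewrite ji mulr0.
  move/eqP; rewrite addr0 subr_eq0 => /eqP ->; rewrite [RHS]big_mkcond /=.
  by apply: eq_bigr => j _; rewrite /Q; case: (j \in M); rewrite ?mulr0.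
have x_out i : i \notin M -> x i = 0.
  by move=> iM; rewrite xQE big1 // => j jM; rewrite leak ?mulr0.
apply/negP: xi0; rewrite negbK; apply/eqP/P_transient => i.
rewrite xQE [RHS](bigID [pred j | j \in M]) /= [X in _ = _ + X]big1 ?addr0 //.
by move=> j jM; rewrite x_out ?mul0r.
Qed.

(* Nonnegativity for the row recursion: the set N of negative entries of d
   would have to keep all of its mass. *)
Lemma excessive_row_ge0 (d g : V -> R) : (forall i, 0 <= g i) ->
  (forall i, d i = \sum_j d j * P j i + g i) -> forall i, 0 <= d i.
Proof.
move=> g0 dE i1; rewrite leNgt; apply/negP => di1.
pose N := [set i | d i < 0].
pose s j := \sum_(i in N) P j i.
have s_le1 j : s j <= 1.
  apply: le_trans (P_row_le1 j); rewrite [leRHS](bigID [pred i | i \in N]) /= lerDl.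
  exact: sumr_ge0.
have mass_balance : \sum_(j in N) d j * (s j - 1) <= 0.
  rewrite [leLHS](eq_bigr (fun j => d j * s j - d j)) => [|j _]; last by rewrite mulrBr mulr1.
  rewrite sumrB subr_le0; apply: (@le_trans _ _ (\sum_j d j * s j)).
    rewrite [leRHS](bigID [pred j | j \in N]) /= lerDl; apply: sumr_ge0 => j.
    by rewrite inE -leNgt => dj; rewrite mulr_ge0 ?sumr_ge0.
  apply: (@le_trans _ _ (\sum_(i in N) \sum_j d j * P j i)).
    by rewrite exchange_big /=; apply: ler_sum => j _; rewrite mulr_sumr.
  by apply: ler_sum => i _; rewrite [leRHS]dE lerDl.
have term_ge0 j : j \in N -> 0 <= d j * (s j - 1).
  by rewrite inE => dj; apply: mulr_le0; [exact: ltW | have := s_le1 j; lra].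
have term_eq0 : forall j, j \in N -> d j * (s j - 1) = 0.
  by apply: psumr_eq0P => //; apply/le_anti; rewrite mass_balance sumr_ge0.
apply: (@no_stochastic_class N i1); first by rewrite inE.
move=> j jN; have /eqP := term_eq0 j jN.
rewrite mulf_eq0 subr_eq0 => /orP[/eqP dj0|/eqP //].
by move: jN; rewrite inE dj0 ltxx.
Qed.

(* Nonnegativity for the column recursion: the set M where u attains a
   negative minimum would have to keep all of its mass. *)
Lemma excessive_column_ge0 (u : V -> R) (h : V -> V -> R) :
  (forall i j, 0 <= P i j * h i j) ->
  (forall i, u i = \sum_j P i j * (h i j + u j)) -> forall i, 0 <= u i.
Proof.
move=> h0 uE i1; rewrite leNgt; apply/negP => ui1.
have [i0 _ i0_min] := @arg_minP _ R V i1 xpredT u isT.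
set mu := u i0 in i0_min; have mu_lt0 : mu < 0 by apply: le_lt_trans (i0_min i1 _) ui1.
pose M := [set i | u i == mu].
have gap_ge0 j : 0 <= \sum_l P j l * (u l - mu).
  by apply: sumr_ge0 => l _; rewrite mulr_ge0 // subr_ge0 i0_min.
have row_ge j : mu <= mu * \sum_l P j l.
  by rewrite ler_nMr ?P_row_le1.
have min_row j : j \in M ->
    \sum_l P j l * (u l - mu) + mu * \sum_l P j l <= mu.
  rewrite inE => /eqP <-; rewrite [leRHS]uE mulr_sumr -big_split /=.
  by apply: ler_sum => l _; have := h0 j l; rewrite mulrDr; lra.
have leak j l : j \in M -> l \notin M -> P j l = 0.
  move=> jM lM; have gap0 : \sum_l P j l * (u l - mu) = 0.
    by apply/le_anti; rewrite gap_ge0 andbT; have := min_row j jM; have := row_ge j; lra.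
  have gap_term_ge0 l' : xpredT l' -> 0 <= P j l' * (u l' - mu).
    by move=> _; rewrite mulr_ge0 // subr_ge0 i0_min.
  move: lM; rewrite inE => /negbTE lM.
  have /eqP := @psumr_eq0P _ _ _ _ gap_term_ge0 gap0 l isT.
  by rewrite mulf_eq0 subr_eq0 lM orbF => /eqP.
apply: (@no_stochastic_class M i0); first by rewrite inE.
move=> j jM; have row1 : \sum_l P j l = 1.
  apply/le_anti; rewrite P_row_le1 -(ler_nM2l mu_lt0) mulr1.
  by have := min_row j jM; have := gap_ge0 j; lra.
rewrite -row1 [RHS](bigID [pred l | l \in M]) /= [X in _ = _ + X]big1 ?addr0 //.
by move=> l; exact: leak.
Qed.
End TransientKernel.

(* Elementary consequences of feasibility of (phi, y); the routing matrix of
   every item is transient because arrival rates are unique. *)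
Section Feasibility.
Variables (R : realType) (V C : finType) (E : rel V) (S : C -> {set V}).
Variables (r : V -> C -> R) (phi : V -> V -> C -> R) (y : V -> C -> R).
Hypothesis feas : feasible E S r phi y.

Lemma feasible_phi_ge0 i j k : 0 <= phi i j k.
Proof. by case: feas => /(_ i j k) /andP[]. Qed.

Lemma feasible_off_edge i j k : ~~ E i j -> phi i j k = 0.
Proof. by case: feas => _ off _ _ _; exact: off. Qed.

Lemma feasible_y_ge0 i k : 0 <= y i k.
Proof. by case: feas => _ _ /(_ i k) /andP[]. Qed.

Lemma feasible_rowsum i k :
  \sum_j phi i j k = (if i \in S k then 0 else 1) - y i k.
Proof. by case: feas => _ _ _ /(_ i k) <- _; rewrite addrC addKr. Qed.

Lemma feasible_rowsum_le1 i k : \sum_j phi i j k <= 1.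
Proof.
rewrite feasible_rowsum lerBlDr; have := feasible_y_ge0 i k.
by case: ifP => _; lra.
Qed.

Lemma feasible_server i k : i \in S k -> y i k = 0.
Proof.
move=> iS; have := feasible_rowsum i k; rewrite iS.
have : 0 <= \sum_j phi i j k by apply: sumr_ge0 => j _; exact: feasible_phi_ge0.
by have := feasible_y_ge0 i k; lra.
Qed.

Lemma feasible_no_forwarding i k :
  (i \in S k) || (y i k == 1) -> forall j, phi i j k = 0.
Proof.
move=> idle j.
have phi_ge0 l : xpredT l -> 0 <= phi i l k by move=> _; exact: feasible_phi_ge0.
suff sum0 : \sum_l phi i l k = 0 by exact: (psumr_eq0P phi_ge0 sum0).
apply/le_anti; rewrite sumr_ge0 // andbT feasible_rowsum.
case/orP: idle => [iS|/eqP ->]; first by rewrite iS sub0r oppr_le0 feasible_y_ge0.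
by case: ifP; rewrite ?subrr // sub0r oppr_le0.
Qed.

(* A solution of x = x phi can be added to the arrival rates, so it is 0. *)
Lemma feasible_transient k (x : V -> R) :
  (forall i, x i = \sum_j x j * phi j i k) -> forall i, x i = 0.
Proof.
move=> xE; case: feas => _ _ _ _ /(_ k) [[t0 t0E] uniq _].
have shifted : (fun i => t0 i + x i) = t0.
  apply: uniq => // i; rewrite t0E {1}xE -addrA -big_split /=.
  by congr (_ + _); apply: eq_bigr => j _; rewrite mulrDl.
move=> i; have := congr1 (fun f => f i) shifted => /= /eqP.
by rewrite addrC -subr_eq0 addrK => /eqP.
Qed.

Lemma arrival_ge0 k (t : V -> R) : arrival_eq r phi k t -> forall i, 0 <= t i.
Proof. by case: feas => _ _ _ _ /(_ k) [_ _]; apply. Qed.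

(* Arrival rates are monotone in the forwarding variables: tb - ta solves
   the row recursion of phi with the nonnegative source ta (phi - psi). *)
Lemma arrival_monotone k (psi : V -> V -> C -> R) (ta tb : V -> R) :
  arrival_eq r psi k ta -> arrival_eq r phi k tb ->
  (forall i j, psi i j k <= phi i j k) -> (forall i, 0 <= ta i) ->
  forall i, ta i <= tb i.
Proof.
move=> taE tbE psi_le ta0 i; rewrite -subr_ge0.
apply: (@excessive_row_ge0 R V (fun i j => phi i j k) _ _ _ (fun i => tb i - ta i)
          (fun i => \sum_j ta j * (phi j i k - psi j i k))).
- by move=> i' j; exact: feasible_phi_ge0.
- by move=> i'; exact: feasible_rowsum_le1.
- exact: feasible_transient.
- by move=> l; apply: sumr_ge0 => j _; rewrite mulr_ge0 // subr_ge0.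
- move=> l; rewrite tbE taE -big_split /= opprD addrACA subrr add0r -sumrB.
  by apply: eq_bigr => j _; ring.
Qed.

Lemma feasible_Flow_ge0 (t : V -> C -> R) :
  (forall i k, 0 <= t i k) -> forall a b, 0 <= Flow phi t a b.
Proof.
by move=> t0 a b; apply: sumr_ge0 => k _; rewrite mulr_ge0 ?feasible_phi_ge0.
Qed.

Lemma feasible_Ycache_ge0 i : 0 <= Ycache y i.
Proof. by apply: sumr_ge0 => k _; exact: feasible_y_ge0. Qed.

End Feasibility.

Lemma arrival_duality (R : realType) (V C : finType) (r : V -> C -> R)
    (p : V -> V -> C -> R) k (ta u : V -> R) :
  arrival_eq r p k ta ->
  \sum_i ta i * (u i - \sum_j p i j k * u j) = \sum_i r i k * u i.
Proof.
move=> taE.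
have inflow : \sum_i ta i * \sum_j p i j k * u j = \sum_j (ta j - r j k) * u j.
  under eq_bigr do rewrite mulr_sumr.
  rewrite exchange_big /=; apply: eq_bigr => j _.
  rewrite {1}taE addrAC subrr add0r mulr_suml.
  by apply: eq_bigr => i _; rewrite mulrA.
under eq_bigr do rewrite mulrBr.
by rewrite sumrB inflow -sumrB; apply: eq_bigr => i _; ring.
Qed.

Section CostLinearization.
Variables (R : realType) (V C : finType) (E : rel V).
Variables (D : V -> V -> R -> R) (B : V -> R -> R).
Hypothesis D_cost : forall i j, E i j -> cost_fun (D i j).
Hypothesis B_cost : forall i, cost_fun (B i).

Lemma Tcost_tangent (phi phid : V -> V -> C -> R) (y yd t td : V -> C -> R) :
  (forall a b, 0 <= Flow phi t a b) -> (forall a b, 0 <= Flow phid td a b) ->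
  (forall i, 0 <= Ycache y i) -> (forall i, 0 <= Ycache yd i) ->
  Tcost E D B phi y t
  + (\sum_a \sum_(b | E a b)
        derive1 (D a b) (Flow phi t a b) * (Flow phid td a b - Flow phi t a b)
     + \sum_i derive1 (B i) (Ycache y i) * (Ycache yd i - Ycache y i))
  <= Tcost E D B phid yd td.
Proof.
move=> F0 Fd0 Y0 Yd0; rewrite /Tcost addrACA; apply: lerD.
  rewrite -big_split; apply: ler_sum => a _; rewrite -big_split /=.
  by apply: ler_sum => b ab; apply: cost_tangent; [exact: D_cost | exact: F0 | exact: Fd0].
by rewrite -big_split; apply: ler_sum => i _; apply: cost_tangent.
Qed.

End CostLinearization.

(* The local inequality at a pair (node, item): x is the shadow price of the
   node, A the routing cost of the competitor; the sign of the gain comes from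
   the comparability of (y, t) and (yd, td). *)
Lemma local_gain_ge0 (R : realFieldType) (t td y yd b x A : R) :
  0 <= x -> 0 <= y -> 0 <= yd -> 0 <= td ->
  t * x <= b -> (0 < y -> b = t * x) -> x * (1 - yd) <= A ->
  (yd <= y /\ t <= td) \/ (y <= yd /\ td <= t) ->
  0 <= td * (A - x * (1 - y)) + b * (yd - y).
Proof.
move=> x0 y0 yd0 td0 tx_le_b b_eq A_ge comparable.
have lower : (yd - y) * (b - td * x) <= td * (A - x * (1 - y)) + b * (yd - y).
  have : 0 <= td * (A - x * (1 - yd)) by rewrite mulr_ge0 // subr_ge0.
  nra.
apply: le_trans lower.
have [y_pos|y_le0] := ltP 0 y.
  rewrite (b_eq y_pos) -mulrBl mulrA.
  by apply: mulr_ge0 => //; case: comparable => -[]; nra.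
have -> : y = 0 by apply/le_anti; rewrite y_le0 y0.
case: comparable => -[yd_le td_le].
  have -> : yd = 0 by lra.
  by rewrite subrr mul0r.
by rewrite subr0 mulr_ge0 // subr_ge0 (le_trans _ tx_le_b) // ler_wpM2r.
Qed.

Section Optimality.
Variables (R : realType) (V C : finType) (E : rel V) (S : C -> {set V}).
Variables (r : V -> C -> R) (D : V -> V -> R -> R) (B : V -> R -> R).
Variables (phi : V -> V -> C -> R) (y t m : V -> C -> R).
Hypothesis E_sym : symmetric E.
Hypothesis D_cost : forall i j, E i j -> cost_fun (D i j).
Hypothesis B_cost : forall i, cost_fun (B i).
Hypothesis feas : feasible E S r phi y.
Hypothesis arr : forall k, arrival_eq r phi k (fun i => t i k).
Hypothesis marg : marginal_eq E S D phi y t m.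
Hypothesis mc : MC E D B phi y t m.

(* c i j: marginal cost of the link used by requests forwarded from i to j;
   b i: marginal caching cost at i. *)
Let c i j := derive1 (D j i) (Flow phi t j i).
Let b i := derive1 (B i) (Ycache y i).

Lemma t_ge0 i k : 0 <= t i k.
Proof. exact: (arrival_ge0 feas (arr k)). Qed.

Lemma c_ge0 i j : E i j -> 0 <= c i j.
Proof.
move=> eij; apply: cost_derive_ge0; first by apply: D_cost; rewrite E_sym.
exact: (feasible_Flow_ge0 feas t_ge0).
Qed.

Lemma b_ge0 i : 0 <= b i.
Proof. exact: (cost_derive_ge0 (B_cost i) (feasible_Ycache_ge0 feas i)). Qed.

Lemma marginal_expand i k : m i k = \sum_j phi i j k * (c i j + m j k).
Proof.
rewrite {1}marg; case: ifP => [idle|_].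
  by rewrite big1 // => j _; rewrite (feasible_no_forwarding feas idle) mul0r.
rewrite big_mkcond /=; apply: eq_bigr => j _; case: ifP => // /negbT nE.
by rewrite (feasible_off_edge feas) ?mul0r.
Qed.

Lemma marginal_ge0 i k : 0 <= m i k.
Proof.
apply: (@excessive_column_ge0 _ _ (fun i j => phi i j k)
          (fun i j => feasible_phi_ge0 feas i j k) (fun i => feasible_rowsum_le1 feas i k)
          (feasible_transient feas (k := k)) (fun i => m i k) c).
- move=> i' j; case eij: (E i' j); first by rewrite mulr_ge0 ?c_ge0 ?(feasible_phi_ge0 feas).
  by rewrite (feasible_off_edge feas) ?eij ?mul0r.
- by move=> i'; exact: marginal_expand.
Qed.

Lemma delta_le_route i k j :
  E i j -> (delta E D B phi y t m i k <= (c i j + m j k)%:E)%E.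
Proof. by move=> eij; have [_ /(_ j eij)] := mc i k; case: ifP => [_ <-|]. Qed.

Lemma delta_on_route i k j :
  0 < phi i j k -> delta E D B phi y t m i k = (c i j + m j k)%:E.
Proof.
move=> pos; have eij : E i j.
  by apply: contraTT pos => /(feasible_off_edge feas) ->; rewrite ltxx.
by have [_ /(_ j eij)] := mc i k; rewrite pos.
Qed.

Let shadow_price i k x :=
  [/\ 0 <= x, m i k = x * (1 - y i k), (forall j, E i j -> x <= c i j + m j k),
       t i k * x <= b i & (0 < y i k -> b i = t i k * x)].

(* A node caching all of item k: x = delta, or 0 when no request arrives. *)
Lemma saturated_price i k : y i k = 1 -> exists x, shadow_price i k x.
Proof.
move=> y1; have [+ _] := mc i k; rewrite y1 ltr01.
have m0 : m i k = 0 by rewrite marg y1 eqxx orbT.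
have [t0|t_ne0] := eqVneq (t i k) 0.
  rewrite t0 mul0e => -[b0].
  exists 0; split; rewrite ?m0 ?mul0r ?mulr0 ?b_ge0 //.
  by move=> j eij; apply: addr_ge0; [exact: c_ge0 | exact: marginal_ge0].
have t_pos : 0 < t i k by rewrite lt0r t_ne0 t_ge0.
case: (delta _ _ _ _ _ _ _ i k) (@delta_le_route i k) => [x||] route.
- rewrite -EFinM => -[bx]; have {}bx : b i = t i k * x := bx.
  exists x; split.
  + by rewrite -(pmulr_rge0 _ t_pos) -bx b_ge0.
  + by rewrite m0 y1 subrr mulr0.
  + by move=> j /route; rewrite lee_fin.
  + by rewrite bx.
  + by move=> _; rewrite bx.
- by rewrite muleC gt0_mulye ?lte_fin // => -[].
- by rewrite muleC gt0_mulNye ?lte_fin // => -[].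
Qed.

(* A node forwarding part of item k: x is the cost of any used link. *)
Lemma routing_price i k : i \notin S k -> y i k != 1 -> exists x, shadow_price i k x.
Proof.
move=> iS y_ne1.
have rowsum : \sum_j phi i j k = 1 - y i k by rewrite (feasible_rowsum feas) (negbTE iS).
have /existsP[j0 pos] : [exists j, 0 < phi i j k].
  apply: contraNT y_ne1 => /existsPn none_pos; apply/eqP.
  suff : \sum_j phi i j k = 0 by lra.
  apply: big1 => j _; apply/le_anti; rewrite (feasible_phi_ge0 feas) andbT.
  by rewrite leNgt none_pos.
have dx := delta_on_route pos; set x := c i j0 + m j0 k in dx.
have cache_cond : t i k * x <= b i /\ (0 < y i k -> b i = t i k * x).
  have [+ _] := mc i k; rewrite dx -EFinM.
  case: ifP => [y_pos [bx]|_]; last by rewrite lee_fin.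
  by have {}bx : b i = t i k * x := bx; rewrite bx.
have [tx_le_b b_eq] := cache_cond.
exists x; split => //.
- have ej0 : E i j0 by apply: contraTT pos => /(feasible_off_edge feas) ->; rewrite ltxx.
  by apply: addr_ge0; [exact: c_ge0 | exact: marginal_ge0].
- rewrite marginal_expand -rowsum mulr_sumr; apply: eq_bigr => j _.
  have [pos_j|] := ltP 0 (phi i j k).
    by have := delta_on_route pos_j; rewrite dx => -[<-]; rewrite mulrC.
  move=> le0; have -> : phi i j k = 0 by apply/le_anti; rewrite le0 (feasible_phi_ge0 feas).
  by rewrite !mul0r mulr0.
- by move=> j /(delta_le_route k); rewrite dx lee_fin.
Qed.

Lemma shadow_price_exists i k : i \notin S k -> exists x, shadow_price i k x.
Proof.
move=> iS; have [y1|y_ne1] := eqVneq (y i k) 1.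
  exact: saturated_price.
exact: routing_price.
Qed.

Variables (phid : V -> V -> C -> R) (yd td : V -> C -> R).
Hypothesis feasd : feasible E S r phid yd.
Hypothesis arrd : forall k, arrival_eq r phid k (fun i => td i k).
Hypothesis comparable :
  (forall i j k, phi i j k <= phid i j k) \/ (forall i j k, phid i j k <= phi i j k).

Lemma td_ge0 i k : 0 <= td i k.
Proof. exact: (arrival_ge0 feasd (arrd k)). Qed.

Lemma states_comparable i k : i \notin S k ->
  (yd i k <= y i k /\ t i k <= td i k) \/ (y i k <= yd i k /\ td i k <= t i k).
Proof.
move=> iS; have := feasible_rowsum feas i k; have := feasible_rowsum feasd i k.
rewrite (negbTE iS) => rowd row.
case: comparable => le; [left|right]; split.
- suff : \sum_j phi i j k <= \sum_j phid i j k by lra.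
  by apply: ler_sum => j _; exact: le.
- exact: (arrival_monotone feasd (arr k) (arrd k) (fun i j => le i j k) (t_ge0 ^~ k)).
- suff : \sum_j phid i j k <= \sum_j phi i j k by lra.
  by apply: ler_sum => j _; exact: le.
- exact: (arrival_monotone feas (arrd k) (arr k) (fun i j => le i j k) (td_ge0 ^~ k)).
Qed.

Let gain i k :=
  td i k * (\sum_j phid i j k * (c i j + m j k) - m i k) + b i * (yd i k - y i k).

Lemma gain_ge0 i k : 0 <= gain i k.
Proof.
have route_sum_ge0 : 0 <= \sum_j phid i j k * (c i j + m j k).
  apply: sumr_ge0 => j _; case eij: (E i j).
    by rewrite mulr_ge0 ?(feasible_phi_ge0 feasd) // addr_ge0 ?c_ge0 ?marginal_ge0.
  by rewrite (feasible_off_edge feasd) ?eij ?mul0r.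
case iS: (i \in S k).
  have m0 : m i k = 0 by rewrite marg iS.
  rewrite /gain m0 (feasible_server feas iS) (feasible_server feasd iS).
  by rewrite subr0 subrr mulr0 addr0 mulr_ge0 ?td_ge0.
have [x [x0 mx route tx_le_b b_eq]] := shadow_price_exists (negbT iS).
rewrite /gain mx; apply: (local_gain_ge0 x0 (feasible_y_ge0 feas i k)
  (feasible_y_ge0 feasd i k) (td_ge0 i k) tx_le_b b_eq _ (states_comparable (negbT iS))).
have rowd : \sum_j phid i j k = 1 - yd i k by rewrite (feasible_rowsum feasd) iS.
rewrite -rowd mulr_sumr; apply: ler_sum => j _; case eij: (E i j).
  by rewrite mulrC ler_wpM2l ?(feasible_phi_ge0 feasd) ?route.
by rewrite (feasible_off_edge feasd) ?eij ?mul0r ?mulr0.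
Qed.

(* For each item, the change of link costs equals the summed routing gains:
   both strategies serve the same requests, whose value is sum_i r_i m_i. *)
Lemma item_balance k :
  \sum_i \sum_j c i j * (td i k * phid i j k - t i k * phi i j k)
  = \sum_i td i k * (\sum_j phid i j k * (c i j + m j k) - m i k).
Proof.
have routed_cost i : \sum_j phi i j k * c i j = m i k - \sum_j phi i j k * m j k.
  by rewrite [m i k]marginal_expand (eq_bigr _ (fun j _ => mulrDr _ _ _)) big_split /= addrK.
have old_cost : \sum_i t i k * \sum_j phi i j k * c i j
    = \sum_i td i k * (m i k - \sum_j phid i j k * m j k).
  rewrite (arrival_duality (fun i => m i k) (arrd k)).
  rewrite -(arrival_duality (fun i => m i k) (arr k)).
  by apply: eq_bigr => i _; rewrite routed_cost.
transitivity (\sum_i td i k * \sum_j phid i j k * c i j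
              - \sum_i t i k * \sum_j phi i j k * c i j).
  rewrite -sumrB; apply: eq_bigr => i _; rewrite !mulr_sumr -sumrB.
  by apply: eq_bigr => j _; ring.
rewrite old_cost -sumrB; apply: eq_bigr => i _.
by rewrite (eq_bigr _ (fun j _ => mulrDr _ _ _)) big_split /=; ring.
Qed.

Lemma edge_gain_by_item :
  \sum_a \sum_(b | E a b)
     derive1 (D a b) (Flow phi t a b) * (Flow phid td a b - Flow phi t a b)
  = \sum_k \sum_i \sum_j c i j * (td i k * phid i j k - t i k * phi i j k).
Proof.
have all_pairs a : \sum_(b | E a b)
       derive1 (D a b) (Flow phi t a b) * (Flow phid td a b - Flow phi t a b)
    = \sum_b c b a * (Flow phid td a b - Flow phi t a b).
  rewrite big_mkcond; apply: eq_bigr => b' _; case: ifP => // /negbT nE.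
  rewrite /Flow !big1 ?subrr ?mulr0 // => k _.
    by rewrite (feasible_off_edge feas) ?mulr0 // E_sym.
  by rewrite (feasible_off_edge feasd) ?mulr0 // E_sym.
rewrite (eq_bigr _ (fun a _ => all_pairs a)) exchange_big /=; apply: esym.
rewrite exchange_big /=; apply: eq_bigr => i _; rewrite exchange_big /=.
by apply: eq_bigr => j _; rewrite /Flow -sumrB mulr_sumr.
Qed.

Lemma linear_gain :
  \sum_a \sum_(b | E a b)
     derive1 (D a b) (Flow phi t a b) * (Flow phid td a b - Flow phi t a b)
  + \sum_i b i * (Ycache yd i - Ycache y i) = \sum_k \sum_i gain i k.
Proof.
rewrite edge_gain_by_item (eq_bigr _ (fun k _ => item_balance k)).
rewrite /gain; under [RHS]eq_bigr do rewrite big_split /=.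
rewrite big_split /=; congr (_ + _).
rewrite exchange_big /=; apply: eq_bigr => i _.
by rewrite /Ycache -sumrB mulr_sumr.
Qed.

(* T lies above its tangent at (phi, y), whose slope is nonnegative. *)
Theorem Tcost_minimal : Tcost E D B phi y t <= Tcost E D B phid yd td.
Proof.
have := Tcost_tangent D_cost B_cost (feasible_Flow_ge0 feas t_ge0)
  (feasible_Flow_ge0 feasd td_ge0) (feasible_Ycache_ge0 feas) (feasible_Ycache_ge0 feasd).
apply: le_trans; rewrite linear_gain lerDl.
by apply: sumr_ge0 => k _; apply: sumr_ge0 => i _; exact: gain_ge0.
Qed.

End Optimality.

Unset Implicit Arguments.

(* The main theorem, with all arguments explicit. *)
Theorem corollary3 (R : realType) (V C : finType) (E : rel V)
    (S : C -> {set V}) (r : V -> C -> R)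
    (D : V -> V -> R -> R) (B : V -> R -> R)
    (phi : V -> V -> C -> R) (y : V -> C -> R) (t m : V -> C -> R)
    (phid : V -> V -> C -> R) (yd : V -> C -> R) (td : V -> C -> R) :
  symmetric E ->
  (forall k, exists s, s \in S k) ->
  (forall i k, 0 <= r i k) ->
  (forall i j, E i j -> cost_fun (D i j)) ->
  (forall i, cost_fun (B i)) ->
  feasible E S r phi y ->
  (forall k, arrival_eq r phi k (fun i => t i k)) ->
  marginal_eq E S D phi y t m ->
  MC E D B phi y t m ->
  feasible E S r phid yd ->
  (forall k, arrival_eq r phid k (fun i => td i k)) ->
  ((forall i j k, phi i j k <= phid i j k) \/
   (forall i j k, phid i j k <= phi i j k)) ->
  Tcost E D B phi y t <= Tcost E D B phid yd td.
Proof.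
move=> E_sym _ _ D_cost B_cost feas arr marg mc feasd arrd comparable.
exact: (Tcost_minimal E_sym D_cost B_cost feas arr marg mc feasd arrd comparable).
Qed.
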